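(* Suppose there exists a $(v,k;r)$-MOHS $\{\mathcal P_1,\dots,\mathcal P_r\}$ over an abelian group $G$ of order $2v+1$ in which every block of every $\mathcal P_i$ admits an ordering $(b_0,\dots,b_{k-1})$ whose partial sums $b_0,b_0+b_1,\dots,b_0+\dots+b_{k-1}$ are pairwise distinct. Then there exist $r$ pairwise orthogonal $k$-cycle systems of order $2v+1$.
   Context: A half-set of an abelian group $G$ of odd order $2v+1\ge7$ is a subset $V\subseteq G\setminus\{0\}$ containing exactly one element of each pair $\{g,-g\}$, $g\ne0$. A $(v,k)$ Heffter system on $V$ is a partition of $V$ into blocks of size $k$ each summing to $0$ in $G$. Two Heffter systems on the same half-set are orthogonal if every block of one meets every block of the other in at most one element; a $(v,k;r)$-MOHS is a set of $r$ pairwise orthogonal $(v,k)$ Heffter systems on a common half-set. A $k$-cycle $(x_0,\dots,x_{k-1})$ on distinct vertices has edges $\{x_i,x_{i+1}\}$ (indices mod $k$). A $k$-cycle system of order $m$ is a set of $k$-cycles whose edge sets partition the edges of $K_m$; two such systems on the same vertex set are orthogonal if every cycle of one shares at most one edge with every cycle of the other. *)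

From HB Require Import structures.
From mathcomp Require Import all_boot all_order all_algebra.
Set Implicit Arguments. Unset Strict Implicit. Unset Printing Implicit Defensive.
Import GRing.Theory.
Local Open Scope ring_scope.

Definition half_set (G : finZmodType) (V : {set G}) : Prop :=
  (0 \notin V) /\ (forall g : G, g != 0 -> (g \in V) != (- g \in V)).

Definition heffter_system (G : finZmodType) (V : {set G}) (k : nat)
    (P : {set {set G}}) : Prop :=
  partition P V /\
  (forall B, B \in P -> #|B| = k /\ \sum_(x in B) x = 0).

Definition orth_heffter (G : finZmodType) (P Q : {set {set G}}) : Prop :=
  forall B C, B \in P -> C \in Q -> (#|B :&: C| <= 1)%N.

Definition MOHS (G : finZmodType) (V : {set G}) (k r : nat)
    (P : 'I_r -> {set {set G}}) : Prop :=
  half_set V /\ (forall i, heffter_system V k (P i)) /\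
  (forall i j, i != j -> orth_heffter (P i) (P j)).

Definition simply_orderable (G : finZmodType) (B : {set G}) : Prop :=
  exists s : seq G, perm_eq s (enum B) /\ uniq (scanl +%R 0 s).

(* the edges {x_i, x_{i+1}} (indices mod k) of the cycle (x_0,...,x_{k-1}) *)
Definition cycle_edges (T : finType) (c : seq T) : {set {set T}} :=
  [set [set p.1; p.2] | p in zip c (rot 1 c)].

Definition is_kcycle (T : finType) (k : nat) (c : seq T) : Prop :=
  uniq c /\ size c = k.

Definition kcycle_system (T : finType) (k : nat) (C : seq (seq T)) : Prop :=
  (forall c, c \in C -> is_kcycle k c) /\
  (forall x y : T, x != y ->
     #|[set j : 'I_(size C) | [set x; y] \in cycle_edges (nth [::] C j)]| = 1%N).

Definition orth_cycle_systems (T : finType) (C D : seq (seq T)) : Prop :=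
  forall c d, c \in C -> d \in D ->
    (#|cycle_edges c :&: cycle_edges d| <= 1)%N.

(* Order every block B of P_i as (b_0, ..., b_(k-1)) with distinct partial sums.
   As the b_j sum to 0, the prefix sums 0, b_0, ..., b_0 + ... + b_(k-2) are
   distinct and form a k-cycle whose edges {p_j, p_j + b_j} have the
   differences b_j in V.  The translates of these base cycles by all g in G form
   a k-cycle system: an edge {x, y} has exactly one difference b in the half-set
   V, b lies in exactly one block, and the position of b in that block fixes the
   translate.  A cycle has one edge per element of its block, so two cycles
   coming from orthogonal Heffter systems share at most one edge.  Relabelling
   G by {0, ..., 2v} concludes. *)

From HB Require Import structures.
From mathcomp Require Import all_boot all_order all_algebra.
From mathcomp Require Import zify.
Set Implicit Arguments. Unset Strict Implicit. Unset Printing Implicit Defensive.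
Import GRing.Theory.

Section CycleEdges.
Variable T : finType.
Implicit Types (c : seq T) (C : seq (seq T)).

Lemma cycle_edgesP c x0 e :
  reflect (exists2 i, i < size c & e = [set nth x0 c i; nth x0 c (i.+1 %% size c)])
          (e \in cycle_edges c).
Proof.
have nth_rot1 i : i < size c -> nth x0 (rot 1 c) i = nth x0 c (i.+1 %% size c).
  case: c => [|x c] // i_lt; rewrite rot1_cons nth_rcons /= in i_lt *.
  case: (ltnP i (size c)) => [i_lt'|i_ge]; first by rewrite modn_small.
  have -> : i = size c by lia.
  by rewrite eqxx modnn.
have size_zip_rot : size (zip c (rot 1 c)) = size c by rewrite size_zip size_rot minnn.
apply: (iffP imsetP) => [[p p_in ->]|[i i_lt ->]].
  have i_lt : index p (zip c (rot 1 c)) < size c by rewrite -size_zip_rot index_mem.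
  exists (index p (zip c (rot 1 c))) => //.
  by rewrite -{1 2}(nth_index (x0, x0) p_in) nth_zip ?size_rot //= nth_rot1.
exists (nth (x0, x0) (zip c (rot 1 c)) i); first by rewrite mem_nth ?size_zip_rot.
by rewrite nth_zip ?size_rot //= nth_rot1.
Qed.

Lemma card_nth_indices (U : Type) (s : seq U) x0 (p : pred U) :
  #|[set i : 'I_(size s) | p (nth x0 s i)]| = count p s.
Proof. by rewrite -sum1dep_card -sum1_count (big_nth x0) big_mkord. Qed.

Lemma kcycle_systemE k C :
  kcycle_system k C <->
  (forall c, c \in C -> is_kcycle k c) /\
  (forall x y : T, x != y -> count (fun c => [set x; y] \in cycle_edges c) C = 1).
Proof.
have countE x y : #|[set i : 'I_(size C) | [set x; y] \in cycle_edges (nth [::] C i)]| =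
                 count (fun c => [set x; y] \in cycle_edges c) C.
  exact: card_nth_indices.
by split=> -[C_cycles C_edges]; split=> // x y /C_edges; rewrite countE.
Qed.
End CycleEdges.

Section Relabelling.
Variables (T T' : finType) (f : T -> T').

Lemma imset_set2 (x y : T) : f @: [set x; y] = [set f x; f y].
Proof. by rewrite imsetU1 imset_set1. Qed.

Lemma cycle_edges_map (c : seq T) :
  cycle_edges (map f c) = [set f @: e | e : {set T} in cycle_edges c].
Proof.
case: c => [|x0 c]; first by apply/setP=> e; apply/imsetP/imsetP=> -[] // e' /imsetP[].
apply/setP=> e; apply/(cycle_edgesP _ (f x0))/imsetP; rewrite size_map.
  case=> i i_lt ->; exists [set nth x0 (x0 :: c) i; nth x0 (x0 :: c) (i.+1 %% size (x0 :: c))].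
    by apply/cycle_edgesP; exists i.
  by rewrite !(nth_map x0) ?ltn_mod // imset_set2.
case=> _ /(cycle_edgesP _ x0) [i i_lt ->] ->; exists i => //.
by rewrite !(nth_map x0) ?ltn_mod // imset_set2.
Qed.

Lemma orth_cycle_systems_map (C D : seq (seq T)) :
  injective f -> orth_cycle_systems C D ->
  orth_cycle_systems (map (map f) C) (map (map f) D).
Proof.
move=> f_inj CD _ _ /mapP[c c_in ->] /mapP[d d_in ->].
rewrite !cycle_edges_map -imsetI; last by move=> e1 e2 _ _ /(imset_inj f_inj).
by rewrite (card_imset _ (imset_inj f_inj)); apply: CD.
Qed.

Hypothesis f_bij : bijective f.

Lemma kcycle_system_map k (C : seq (seq T)) :
  kcycle_system k C -> kcycle_system k (map (map f) C).
Proof.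
have f_inj := bij_inj f_bij.
move=> /kcycle_systemE[C_cycles C_edges]; apply/kcycle_systemE; split.
  move=> _ /mapP[c /C_cycles[c_uniq c_size] ->].
  by split; rewrite ?map_inj_uniq ?size_map.
move=> x y; case: f_bij => g fK gK; rewrite -(gK x) -(gK y) (inj_eq f_inj) count_map.
move=> /C_edges <-; apply: eq_count => c /=.
by rewrite cycle_edges_map -imset_set2 (mem_imset _ _ (imset_inj f_inj)).
Qed.
End Relabelling.

Section PrefixSums.
Variable G : zmodType.
Implicit Types (s : seq G) (a : G).
Local Open Scope ring_scope.

Definition prefix_sum s i : G := \sum_(x <- take i s) x.

Lemma prefix_sum0 s : prefix_sum s 0 = 0.
Proof. by rewrite /prefix_sum take0 big_nil. Qed.

Lemma prefix_sum_size s : prefix_sum s (size s) = \sum_(x <- s) x.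
Proof. by rewrite /prefix_sum take_size. Qed.

Lemma prefix_sumS s i : (i < size s)%N -> prefix_sum s i.+1 = prefix_sum s i + s`_i.
Proof. by move=> i_lt; rewrite /prefix_sum (take_nth 0 i_lt) big_rcons. Qed.

Lemma prefix_sumS_mod s i : \sum_(x <- s) x = 0 -> (i < size s)%N ->
  prefix_sum s (i.+1 %% size s) = prefix_sum s i + s`_i.
Proof.
move=> s_sum0 i_lt; rewrite -prefix_sumS //.
case: (ltnP i.+1 (size s)) => [/modn_small -> //|i_ge].
have -> : i.+1 = size s by lia.
by rewrite modnn prefix_sum0 prefix_sum_size.
Qed.

Lemma foldl_addr a s : foldl +%R a s = a + \sum_(x <- s) x.
Proof.
elim: s a => [|x s IHs] a /=; first by rewrite big_nil addr0.
by rewrite IHs big_cons addrA.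
Qed.

Lemma scanl_addr s :
  scanl +%R 0 s = [seq prefix_sum s i.+1 | i <- iota 0 (size s)].
Proof.
apply: (@eq_from_nth _ 0); first by rewrite size_scanl size_map size_iota.
move=> i; rewrite size_scanl => i_lt.
by rewrite nth_scanl // foldl_addr add0r (nth_map 0%N) ?size_iota ?nth_iota.
Qed.

(* When the total sum vanishes, the prefix sums 0, b_0, ..., b_0 + ... + b_(k-2)
   are a rotation of the partial sums b_0, ..., b_0 + ... + b_(k-1) = 0. *)
Lemma uniq_prefix_sums s : \sum_(x <- s) x = 0 -> uniq (scanl +%R 0 s) ->
  uniq [seq prefix_sum s i | i <- iota 0 (size s)].
Proof.
rewrite scanl_addr; case: (size s) (prefix_sum_size s) => [|k] // sum_k s_sum0.
rewrite -(addn1 k) iotaD map_cat cats1 -(rotr_uniq 1) rotr1_rcons add0n sum_k s_sum0.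
by rewrite -iotaD addn1 /= -(prefix_sum0 s) (iotaDl 1 0) -map_comp.
Qed.
End PrefixSums.

Section ShiftedCycle.
Variable G : finZmodType.
Implicit Types (s : seq G) (g : G).
Local Open Scope ring_scope.

Definition shifted_cycle s g : seq G := [seq g + prefix_sum s i | i <- iota 0 (size s)].

Lemma size_shifted_cycle s g : size (shifted_cycle s g) = size s.
Proof. by rewrite size_map size_iota. Qed.

Lemma shifted_cycle_uniq s g : \sum_(x <- s) x = 0 -> uniq (scanl +%R 0 s) ->
  uniq (shifted_cycle s g).
Proof.
move=> s_sum0 s_simple; rewrite /shifted_cycle (map_comp (+%R g) (prefix_sum s)).
by rewrite map_inj_uniq ?uniq_prefix_sums //; apply: addrI.
Qed.

Lemma shifted_cycle_edgesP s g e : \sum_(x <- s) x = 0 ->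
  reflect (exists2 i, (i < size s)%N &
             e = [set g + prefix_sum s i; g + prefix_sum s i + s`_i])
          (e \in cycle_edges (shifted_cycle s g)).
Proof.
move=> s_sum0; apply: (iffP (cycle_edgesP _ 0 _)); rewrite size_shifted_cycle.
all: move=> [i i_lt ->]; exists i => //.
all: have i1_lt : (i.+1 %% size s < size s)%N by rewrite ltn_mod; case: (size s) i_lt.
all: by rewrite !(nth_map 0%N) ?size_iota ?nth_iota // !add0n prefix_sumS_mod ?addrA.
Qed.
End ShiftedCycle.

Section HalfSet.
Variables (G : finZmodType) (V : {set G}).
Hypothesis hV : half_set V.
Local Open Scope ring_scope.

Lemma half_set_neq0 b : b \in V -> b != 0.
Proof. by apply: contraTneq => ->; case: hV. Qed.

Lemma half_set_oppN b : b \in V -> - b \notin V.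
Proof. by move=> bV; have := hV.2 b (half_set_neq0 bV); rewrite bV; case: (_ \in V). Qed.

(* Of the two differences +-b of the endpoints of an edge, only one lies in V. *)
Lemma half_set_edge_inj a a' b b' : b \in V -> b' \in V ->
  [set a; a + b] = [set a'; a' + b'] -> a = a' /\ b = b'.
Proof.
move=> bV b'V E.
have addr_eqself (x y : G) : x + y = x -> y = 0.
  by move=> xy; apply: (addrI x); rewrite addr0.
have : a \in [set a'; a' + b'] by rewrite -E set21.
have : a + b \in [set a'; a' + b'] by rewrite -E set22.
rewrite !inE => /orP[] /eqP ab /orP[] /eqP a_eq; subst a.
- by move: (half_set_neq0 bV); rewrite (addr_eqself _ _ ab) eqxx.
- rewrite -addrA in ab; have /eqP := addr_eqself _ _ ab; rewrite addr_eq0 => /eqP b'_opp.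
  by move: (half_set_oppN bV); rewrite -b'_opp b'V.
- by split=> //; apply: addrI ab.
- by move: (half_set_neq0 bV); rewrite (addr_eqself _ _ ab) eqxx.
Qed.

Lemma half_set_edge x y : x != y -> exists a b, b \in V /\ [set x; y] = [set a; a + b].
Proof.
move=> xy; have yx_neq0 : y - x != 0 by rewrite subr_eq0 eq_sym.
case: (boolP (y - x \in V)) => yxV; first by exists x, (y - x); rewrite subrKC.
exists y, (x - y); split; last by rewrite subrKC setUC.
by move: (hV.2 _ yx_neq0); rewrite (negPf yxV) opprB; case: (x - y \in V).
Qed.

Lemma mem_shifted_cycle_edges s g a b :
  uniq s -> \sum_(x <- s) x = 0 -> {subset s <= V} -> b \in V ->
  ([set a; a + b] \in cycle_edges (shifted_cycle s g)) =
  (b \in s) && (a == g + prefix_sum s (index b s)).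
Proof.
move=> s_uniq s_sum0 sV bV; apply/(shifted_cycle_edgesP _ _ s_sum0)/andP.
  case=> i i_lt /(half_set_edge_inj bV (sV _ (mem_nth 0 i_lt))) [-> ->].
  by rewrite mem_nth // index_uniq.
case=> b_in /eqP ->; exists (index b s); first by rewrite index_mem.
by rewrite nth_index.
Qed.
End HalfSet.

Section Development.
Variables (G : finZmodType) (V : {set G}) (k : nat).
Local Open Scope ring_scope.

Definition simple_block_orders (P : {set {set G}}) (ord : {set G} -> seq G) : Prop :=
  forall B, B \in P -> perm_eq (ord B) (enum B) /\ uniq (scanl +%R 0 (ord B)).

Lemma simply_orderable_block_orders (P : {set {set G}}) :
  (forall B, B \in P -> simply_orderable B) -> exists ord, simple_block_orders P ord.
Proof.
move=> P_orderable.
apply: (@fin_all_exists _ (fun=> seq G)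
          (fun B s => B \in P -> perm_eq s (enum B) /\ uniq (scanl +%R 0 s))) => B.
by case: (boolP (B \in P)) => [/P_orderable[s] | B_notin]; [exists s | exists [::]].
Qed.

Variables (P : {set {set G}}) (ord : {set G} -> seq G).
Hypotheses (hV : half_set V) (hP : heffter_system V k P) (P_ord : simple_block_orders P ord).

Lemma mem_block_order B x : B \in P -> (x \in ord B) = (x \in B).
Proof. by move=> /P_ord[/perm_mem-> _]; rewrite mem_enum. Qed.

Lemma block_order_uniq B : B \in P -> uniq (ord B).
Proof. by move=> /P_ord[/perm_uniq-> _]; apply: enum_uniq. Qed.

Lemma size_block_order B : B \in P -> size (ord B) = k.
Proof. by move=> BP; have [/perm_size-> _] := P_ord BP; rewrite -cardE; case: (hP.2 B BP). Qed.

Lemma sum_block_order B : B \in P -> \sum_(x <- ord B) x = 0.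
Proof.
move=> BP; have [ord_perm _] := P_ord BP.
by rewrite (perm_big _ ord_perm) big_enum; case: (hP.2 B BP).
Qed.

Lemma heffter_block_sub B : B \in P -> {subset B <= V}.
Proof. by move=> BP x xB; rewrite -(cover_partition hP.1); apply/bigcupP; exists B. Qed.

Definition development : seq (seq G) :=
  [seq shifted_cycle (ord Bg.1) Bg.2 | Bg <- enum [set Bg : {set G} * G | Bg.1 \in P]].

Lemma mem_development_edges B g a b : B \in P -> b \in V ->
  ([set a; a + b] \in cycle_edges (shifted_cycle (ord B) g)) =
  (b \in B) && (a == g + prefix_sum (ord B) (index b (ord B))).
Proof.
move=> BP bV; have ordV : {subset ord B <= V}.
  by move=> x; rewrite mem_block_order //; apply: heffter_block_sub.
by rewrite (mem_shifted_cycle_edges hV) ?block_order_uniq ?sum_block_order ?mem_block_order.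
Qed.

Lemma development_edge_label B g e : B \in P ->
  e \in cycle_edges (shifted_cycle (ord B) g) -> exists a b, b \in B /\ e = [set a; a + b].
Proof.
move=> BP /(shifted_cycle_edgesP _ _ (sum_block_order BP))[i i_lt ->].
by exists (g + prefix_sum (ord B) i), (ord B)`_i; rewrite -mem_block_order // mem_nth.
Qed.

Lemma development_kcycle_system : kcycle_system k development.
Proof.
apply/kcycle_systemE; split.
  move=> c /mapP[[B g]]; rewrite mem_enum inE /= => BP ->.
  split; last by rewrite size_shifted_cycle size_block_order.
  by rewrite shifted_cycle_uniq ?sum_block_order //; case: (P_ord BP).
move=> x y /(half_set_edge hV)[a [b [bV ->]]].
have b_cover : b \in cover P by rewrite (cover_partition hP.1).
(* The only cycle through {a, a + b} is the translate of the cycle of the block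
   of b that places the edge labelled b at a. *)
pose B := pblock P b; pose g := a - prefix_sum (ord B) (index b (ord B)).
have BP : B \in P := pblock_mem b_cover.
rewrite count_map (@eq_in_count _ _ (pred1 (B, g))); last first.
  case=> B' g'; rewrite mem_enum inE /= => B'P; rewrite mem_development_edges //.
  apply/andP/eqP => [[bB' /eqP a_eq] | [-> ->]]; last by rewrite mem_pblock subrK.
  have P_triv : trivIset P by case/and3P: hP.1.
  have B'_eq : B' = B by rewrite /B (def_pblock P_triv B'P bB').
  by rewrite /g -B'_eq a_eq addrK.
by rewrite count_uniq_mem ?enum_uniq // mem_enum inE /= BP.
Qed.
End Development.

Lemma development_orth (G : finZmodType) (V : {set G}) k (P Q : {set {set G}}) ordP ordQ :
  half_set V -> heffter_system V k P -> heffter_system V k Q ->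
  simple_block_orders P ordP -> simple_block_orders Q ordQ -> orth_heffter P Q ->
  orth_cycle_systems (development P ordP) (development Q ordQ).
Proof.
move=> hV hP hQ P_ord Q_ord PQ _ _ /mapP[[B g]] + -> /mapP[[B' g']] + ->.
rewrite !mem_enum !inE /= => BP B'P.
apply/card_le1_eqP => e1 e2; rewrite !inE => /andP[e1B e1B'] /andP[e2B e2B'].
have [a1 [b1 [b1B e1_eq]]] := development_edge_label hP P_ord BP e1B.
have [a2 [b2 [b2B e2_eq]]] := development_edge_label hP P_ord BP e2B.
have [b1V b2V] := (heffter_block_sub hP BP b1B, heffter_block_sub hP BP b2B).
move: e1B e1B' e2B e2B'; rewrite e1_eq e2_eq.
rewrite !(mem_development_edges hV hP P_ord) ?(mem_development_edges hV hQ Q_ord) //.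
move=> /andP[_ /eqP->] /andP[b1B' _] /andP[_ /eqP->] /andP[b2B' _].
have -> // : b1 = b2.
by apply: (card_le1_eqP (PQ B B' BP B'P)); rewrite inE ?b1B ?b2B.
Qed.

Theorem proposition6p4 (G : finZmodType) (v k r : nat)
  (hv : (3 <= v)%N) (hG : #|G| = (2 * v + 1)%N)
  (V : {set G}) (P : 'I_r -> {set {set G}}) :
  MOHS V k P ->
  (forall (i : 'I_r) (B : {set G}), B \in P i -> simply_orderable B) ->
  exists Cs : 'I_r -> seq (seq 'I_(2 * v + 1)),
    (forall i, kcycle_system k (Cs i)) /\
    (forall i j, i != j -> orth_cycle_systems (Cs i) (Cs j)).
Proof.
move=> [hV [hP hPQ]] orderable.
have [ord P_ord] := fin_all_exists (fun i => simply_orderable_block_orders (orderable i)).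
have [f f_bij] : exists f : G -> 'I_(2 * v + 1), bijective f.
  exists (cast_ord hG \o enum_rank); apply: bij_comp (enum_rank_bij G).
  by exists (cast_ord (esym hG)) => x; rewrite ?cast_ordK ?cast_ordKV.
exists (fun i => map (map f) (development (P i) (ord i))); split.
  move=> i; exact/(kcycle_system_map f_bij)/(development_kcycle_system hV (hP i) (P_ord i)).
move=> i j ij; apply: orth_cycle_systems_map (bij_inj f_bij) _.
exact: development_orth (hP i) (hP j) (P_ord i) (P_ord j) (hPQ i j ij).
Qed.
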